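(* Let $G=(V,E)$ be a connected, simple, undirected, unweighted graph and $S\subseteq V$ with $|S|\ge2$. For $u\in V$ let $\deg_S(u)$ be the number of neighbors of $u$ in $S$, and define the $V\times V$ matrix $R$ by $R[u,v]=1$ if $u=v$ and $\deg_S(u)=0$; $R[u,v]=1/\deg_S(u)$ if $\{u,v\}\in E$ and $v\in S$; and $R[u,v]=0$ otherwise. Let $\mathbf{Q}$ be the transition matrix of $\textsc{ShortCut}(G,S)$ and $\mathbf{S}$ that of $\textsc{Schur}(G,S)$. Then for all $u\in S$, $(\mathbf{Q}R)[u,u]<1$, and for all $u\neq v$ in $S$, $$\mathbf{S}[u,v]=\frac{(\mathbf{Q}R)[u,v]}{1-(\mathbf{Q}R)[u,u]},$$ where $(\mathbf{Q}R)[u,u]$ equals the probability that a simple random walk on $G$ started at $u$ returns to $u$ before visiting any other vertex of $S$.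
   Context: The shortcut graph: for $u\in V$, let $x_0=u,x_1,\dots$ be a simple random walk on $G$ and $j=\min\{i>0:x_i\in S\}$; $\mathbf{Q}[u,v]=\Pr[x_{j-1}=v]$. The Schur complement transition matrix: for $u\ne v\in S$, $\mathbf{S}[u,v]$ is the probability that $v$ is the first vertex of $S\setminus\{u\}$ visited by a simple random walk on $G$ started at $u$, and $\mathbf{S}[u,u]=0$. *)

From HB Require Import structures.
From mathcomp Require Import all_boot all_order all_algebra.
From mathcomp Require Import all_classical all_reals all_analysis.
Set Implicit Arguments. Unset Strict Implicit. Unset Printing Implicit Defensive.
Import Order.TTheory GRing.Theory Num.Theory.
Local Open Scope ring_scope.

(* Infinite sums of nonnegative probability series are written as the limit
   of partial sums: limn (fun n => \sum_(k < n) F k). *)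

Section RandomWalk.
Variables (R : realType) (V : finType) (e : rel V).

Definition deg (u : V) : nat := #|[set v | e u v]|.

Definition step (u v : V) : R := if e u v then (deg u)%:R^-1 else 0.

(* probability that the simple random walk started at x follows exactly
   the steps listed in p (i.e. x_1, x_2, ... = p) *)
Fixpoint wprob (x : V) (p : seq V) : R :=
  if p is y :: p' then step x y * wprob y p' else 1.

(* Shortcut graph transition matrix:
   Q[u,v] = Pr[x_{j-1} = v], j = min{i > 0 : x_i \in S}.
   The event {j = k+1, x_{j-1} = v} is the disjoint union over the
   interior points x_1..x_k (all outside S) and the final x_{k+1} \in S. *)
Definition shortcutQ (S : {set V}) (u v : V) : R :=
  limn (fun n => \sum_(k < n) \sum_(p : k.-tuple V) \sum_(w in S)
     (if all (fun x => x \notin S) p && (last u p == v)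
      then wprob u (rcons p w) else 0)).

(* probability that the first vertex of A visited at a time i > 0 by the
   walk started at u is v *)
Definition first_hit (A : {set V}) (u v : V) : R :=
  limn (fun n => \sum_(k < n) \sum_(p : k.-tuple V)
     (if all (fun x => x \notin A) p then wprob u (rcons p v) else 0)).

Definition schurS (S : {set V}) (u v : V) : R :=
  if u == v then 0 else first_hit (S :\ u) u v.

Definition return_prob (S : {set V}) (u : V) : R := first_hit S u u.

Definition degS (S : {set V}) (u : V) : nat := #|[set v in S | e u v]|.

Definition Rmat (S : {set V}) (u v : V) : R :=
  if (u == v) && (degS S u == 0)%N then 1
  else if e u v && (v \in S) then (degS S u)%:R^-1 else 0.

Definition QR (S : {set V}) (u v : V) : R :=
  \sum_(w : V) shortcutQ S u w * Rmat S w v.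

End RandomWalk.

Definition simple_connected_graph (V : finType) (e : rel V) : Prop :=
  symmetric e /\ irreflexive e /\ (forall x y : V, connect e x y).

(* A walk started at u whose first return to S is at u starts afresh there.  Writing
   F_A(x, v) for the probability that the first visit at a positive time of the walk from
   x to A is at v, this yields the renewal equation
     F_{S\u}(u, v) = F_S(u, v) + F_S(u, u) F_{S\u}(u, v),
   which at the level of finite path lengths is a convolution identity.  For v in S,
   (Q R)[u, v] = F_S(u, v): Q records the last vertex before S, and R replaces the
   aggregated exit probability degS/deg by the single step to v.  Finally F_S(u, u) < 1,
   because the F_S(u, .) sum to at most 1 and connectivity makes some F_S(u, v), v <> u,
   positive; solving the renewal equation gives S[u, v]. *)
From Pilot Require Import Defs.
From HB Require Import structures.
From mathcomp Require Import all_boot all_order all_algebra.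
From mathcomp Require Import all_classical all_reals all_analysis.
From mathcomp Require Import zify.
Import numFieldNormedType.Exports.
Import Order.TTheory GRing.Theory Num.Theory.
Local Open Scope ring_scope.
Set Implicit Arguments. Unset Strict Implicit. Unset Printing Implicit Defensive.

Section BigSums.
Variables (R : nmodType) (V : finType).

Lemma big_tuple0 (F : 0.-tuple V -> R) : \sum_(p : 0.-tuple V) F p = F [tuple].
Proof. by rewrite (big_pred1 [tuple]) // => p; apply/eqP; rewrite (tuple0 p). Qed.

Lemma big_tupleS k (F : k.+1.-tuple V -> R) :
  \sum_(p : k.+1.-tuple V) F p = \sum_(x : V) \sum_(p : k.-tuple V) F [tuple of x :: p].
Proof.
rewrite pair_big /= (reindex (fun xp : V * k.-tuple V => [tuple of xp.1 :: xp.2])) //=.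
exists (fun t : k.+1.-tuple V => (thead t, [tuple of behead t])).
  by move=> [x p] _ /=; rewrite theadE; congr pair; apply: val_inj.
by move=> t _; rewrite /= -tuple_eta.
Qed.

Lemma sum_triangle (g : nat -> nat -> R) n :
  \sum_(k < n) \sum_(i < k) g i (k.-1 - i)%N = \sum_(i < n) \sum_(j < n.-1 - i) g i j.
Proof.
elim: n => [|n IH]; first by rewrite !big_ord0.
rewrite big_ord_recr /= IH [RHS]big_ord_recr /=.
rewrite [X in _ = _ + X]big1 ?addr0; last by move=> j _; have := ltn_ord j; lia.
rewrite -big_split /=; apply: eq_bigr => i _.
have -> : (n - i = (n.-1 - i).+1)%N by have := ltn_ord i; lia.
by rewrite big_ord_recr.
Qed.

End BigSums.

Section Series.
Variable R : realType.
Implicit Types (f a b c : nat -> R) (n : nat).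

Definition psum f n : R := \sum_(k < n) f k.

Section Nonnegative.
Variable f : nat -> R.
Hypothesis f_ge0 : forall k, 0 <= f k.

Lemma psum_ge0 n : 0 <= psum f n.
Proof. exact: sumr_ge0. Qed.

Lemma nondecreasing_psum : nondecreasing_seq (psum f).
Proof.
move=> n m nm; rewrite /psum (big_ord_widen m f nm).
by rewrite [leRHS](bigID (fun i : 'I_m => (i < n)%N)) /= lerDl sumr_ge0.
Qed.

Lemma is_cvg_psum M : (forall n, psum f n <= M) -> cvgn (psum f).
Proof.
move=> fM; apply: nondecreasing_is_cvgn; first exact: nondecreasing_psum.
by exists M => _ [n _ <-]; apply: fM.
Qed.

Lemma psum_le_lim n : cvgn (psum f) -> psum f n <= limn (psum f).
Proof. by move=> cf; apply: nondecreasing_cvgn_le => //; apply: nondecreasing_psum. Qed.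

Lemma psum_lim_ge0 : cvgn (psum f) -> 0 <= limn (psum f).
Proof. by move=> cf; apply: le_trans (psum_le_lim 0 cf); exact: psum_ge0. Qed.

End Nonnegative.

Lemma cvgn_sum (I : finType) (P : pred I) (f : I -> nat -> R) (l : I -> R) :
  (forall i, P i -> (f i @ \oo --> l i)%classic) ->
  (\sum_(i | P i) f i n @[n --> \oo] --> \sum_(i | P i) l i)%classic.
Proof. by move=> cf; apply: cvg_big => [|i /cf //]; exact: add_continuous. Qed.

Lemma renewal_lim a b c :
  (forall k, 0 <= a k) -> (forall k, 0 <= b k) -> (forall k, 0 <= c k) ->
  cvgn (psum a) -> cvgn (psum b) -> cvgn (psum c) ->
  (forall n, psum a n = psum b n + \sum_(i < n) c i * psum a (n.-1 - i)) ->
  limn (psum a) = limn (psum b) + limn (psum c) * limn (psum a).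
Proof.
move=> a0 b0 c0 ca cb cc renew; apply/eqP; rewrite eq_le; apply/andP; split.
  apply: limr_le => //; apply: nearW => n; rewrite renew.
  apply: lerD; first exact: psum_le_lim.
  apply: (@le_trans _ _ (\sum_(i < n) c i * limn (psum a))).
    by apply: ler_sum => i _; apply: ler_wpM2l => //; exact: psum_le_lim.
  by rewrite -mulr_suml ler_wpM2r ?psum_lim_ge0 ?psum_le_lim.
apply: (@cvgr_to_le _ \oo%classic _ _ (fun n => psum b n + psum c n * psum a n)).
  by apply: cvgD => //; apply: cvgM.
(* The convolution in [psum a (n + n)] contains every product [c i * psum a j], i, j < n. *)
apply: nearW => n; apply: le_trans (psum_le_lim a0 (n + n) ca).
rewrite [psum a (n + n)]renew; apply: lerD.
  by apply: nondecreasing_psum => //; exact: leq_addr.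
pose g i := c i * psum a ((n + n).-1 - i)%N.
have g0 i : 0 <= g i by rewrite mulr_ge0 ?psum_ge0.
apply: (@le_trans _ _ (psum g n)); last by apply: nondecreasing_psum => //; exact: leq_addr.
rewrite /psum mulr_suml; apply: ler_sum => i _; rewrite /g.
by apply: ler_wpM2l => //; apply: nondecreasing_psum => //; have := ltn_ord i; lia.
Qed.

End Series.

Section FirstEntrance.
Variables (R : realType) (V : finType) (e : rel V).
Local Notation step := (step R e).

(* [hit_at A k x v]: the walk from x enters A for the first time at time k.+1, at v.
   [exit_at A k x v]: it enters A first at time k.+1, and x_k = v.
   [survive A k x]: it avoids A at times 1..k. *)
Fixpoint hit_at (A : {set V}) (k : nat) (x v : V) : R :=
  if k is k'.+1 then \sum_(y | y \notin A) step x y * hit_at A k' y v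
  else step x v.

Fixpoint exit_at (A : {set V}) (k : nat) (x v : V) : R :=
  if k is k'.+1 then \sum_(y | y \notin A) step x y * exit_at A k' y v
  else (x == v)%:R * \sum_(w in A) step x w.

Fixpoint survive (A : {set V}) (k : nat) (x : V) : R :=
  if k is k'.+1 then \sum_(y | y \notin A) step x y * survive A k' y
  else 1.

Variable A : {set V}.

Lemma hit_atE k x v :
  \sum_(p : k.-tuple V) (if all (fun y => y \notin A) p then wprob R e x (rcons p v) else 0)
  = hit_at A k x v.
Proof.
elim: k x => [|k IH] x; first by rewrite big_tuple0 /= mulr1.
rewrite big_tupleS /= [RHS]big_mkcond /=; apply: eq_bigr => y _.
case: ifP => yA /=; last by rewrite big1.
by rewrite -IH mulr_sumr; apply: eq_bigr => p _; case: ifP; rewrite ?mulr0.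
Qed.

Lemma exit_atE k x v :
  \sum_(p : k.-tuple V) \sum_(w in A)
     (if all (fun y => y \notin A) p && (last x p == v) then wprob R e x (rcons p w) else 0)
  = exit_at A k x v.
Proof.
elim: k x => [|k IH] x.
  rewrite big_tuple0 /= eq_sym; case: eqP => _; rewrite ?mul1r ?mul0r; last by rewrite big1.
  by apply: eq_bigr => w _; rewrite mulr1.
rewrite big_tupleS /= [RHS]big_mkcond /=; apply: eq_bigr => y _.
case: ifP => yA /=; last by rewrite big1 // => p _; rewrite big1.
rewrite -IH mulr_sumr; apply: eq_bigr => p _; rewrite mulr_sumr.
by apply: eq_bigr => w _; case: ifP; rewrite ?mulr0.
Qed.

Lemma step_ge0 x y : 0 <= step x y.
Proof. by rewrite /step; case: ifP; rewrite ?invr_ge0 ?ler0n. Qed.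

Lemma step_gt0 x y : e x y -> 0 < step x y.
Proof.
move=> exy; rewrite /step exy invr_gt0 ltr0n.
by apply/card_gt0P; exists y; rewrite inE.
Qed.

Lemma sum_step_le1 x : \sum_y step x y <= 1.
Proof.
rewrite /step -big_mkcond /= sumr_const.
have -> : #|[pred y | e x y]| = deg e x by apply: eq_card => y; rewrite !inE.
case: (deg e x) => [|d]; first by rewrite mulr0n ler01.
by rewrite -[_ *+ _]mulr_natr mulVf ?pnatr_eq0.
Qed.

Lemma hit_at_ge0 k x v : 0 <= hit_at A k x v.
Proof.
elim: k x => [|k IH] x /=; first exact: step_ge0.
by apply: sumr_ge0 => y _; rewrite mulr_ge0 ?step_ge0.
Qed.

Lemma exit_at_ge0 k x v : 0 <= exit_at A k x v.
Proof.
elim: k x => [|k IH] x /=.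
  by rewrite mulr_ge0 ?ler0n //; apply: sumr_ge0 => y _; exact: step_ge0.
by apply: sumr_ge0 => y _; rewrite mulr_ge0 ?step_ge0.
Qed.

Lemma survive_ge0 k x : 0 <= survive A k x.
Proof.
elim: k x => [|k IH] x /=; first exact: ler01.
by apply: sumr_ge0 => y _; rewrite mulr_ge0 ?step_ge0.
Qed.

(* Conservation of mass: at each time the walk has either entered A or not. *)
Lemma hit_survive_le1 n x :
  \sum_(k < n) \sum_(w in A) hit_at A k x w + survive A n x <= 1.
Proof.
elim: n x => [|n IH] x; first by rewrite big_ord0 add0r.
rewrite big_ord_recl /=.
have -> : \sum_(i < n) \sum_(w in A) hit_at A (lift ord0 i) x w =
    \sum_(y | y \notin A) step x y * \sum_(i < n) \sum_(w in A) hit_at A i y w.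
  under eq_bigr => i _ do rewrite lift0 /= exchange_big /=.
  rewrite exchange_big /=; apply: eq_bigr => y _.
  by rewrite mulr_sumr; apply: eq_bigr => i _; rewrite mulr_sumr.
rewrite -addrA -big_split /=; apply: le_trans (sum_step_le1 x).
rewrite [leRHS](bigID (fun y => y \in A)) lerD // ler_sum // => y _.
by rewrite -mulrDr ler_piMr ?step_ge0.
Qed.

Lemma sum_psum_hit_at_le1 (B : {set V}) x n : B \subset A ->
  \sum_(w in B) psum (fun k => hit_at A k x w) n <= 1.
Proof.
move=> BA; apply: le_trans (hit_survive_le1 n x); rewrite /psum exchange_big /=.
apply: ler_wpDr; first exact: survive_ge0.
apply: ler_sum => k _; rewrite [leRHS](big_setID B) /= (finset.setIidPr BA).
by rewrite lerDl sumr_ge0 // => w _; exact: hit_at_ge0.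
Qed.

Lemma sum_exit_at k x : \sum_v exit_at A k x v = \sum_(w in A) hit_at A k x w.
Proof.
elim: k x => [|k IH] x /=.
  rewrite (bigD1 x) //= eqxx mul1r [X in _ + X]big1 ?addr0 // => v /negbTE.
  by rewrite eq_sym => ->; rewrite mul0r.
rewrite exchange_big /=.
transitivity (\sum_(y | y \notin A) step x y * \sum_(w in A) hit_at A k y w).
  by apply: eq_bigr => y _; rewrite -IH mulr_sumr.
by rewrite exchange_big /=; apply: eq_bigr => y _; rewrite mulr_sumr.
Qed.

(* [exit_at] carries the factor degS/deg of the last step, which [Rmat] turns back into 1/deg. *)
Lemma exit_at_Rmat k x v : v \in A ->
  \sum_w exit_at A k x w * Rmat R e A w v = hit_at A k x v.
Proof.
move=> vA; elim: k x => [|k IH] x /=.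
  rewrite (bigD1 x) //= eqxx mul1r [X in _ + X]big1 ?addr0; last first.
    by move=> w /negbTE; rewrite eq_sym => ->; rewrite !mul0r.
  have -> : \sum_(w in A) step x w = (degS e A x)%:R * (deg e x)%:R^-1.
    rewrite /step -big_mkcondr /= sumr_const -(mulr_natr (deg e x)%:R^-1) mulrC.
    by congr (_%:R * _); apply: eq_card => w; rewrite !inE.
  rewrite /Rmat /step vA andbT; case: (eqVneq (degS e A x) 0%N) => [d0|dn0].
    suff -> : e x v = false by rewrite d0 mulr0n !mul0r.
    apply/negP => exv; have : v \in [set w in A | e x w] by rewrite inE vA exv.
    by rewrite (cards0_eq d0) inE.
  rewrite andbF; case: ifP => _; last by rewrite mulr0.
  by rewrite mulrAC mulfV ?mul1r // pnatr_eq0.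
transitivity (\sum_(y | y \notin A) step x y * \sum_w exit_at A k y w * Rmat R e A w v).
  under eq_bigr => w _ do rewrite mulr_suml.
  rewrite exchange_big /=; apply: eq_bigr => y _.
  by rewrite mulr_sumr; apply: eq_bigr => w _; rewrite mulrA.
by apply: eq_bigr => y _; rewrite IH.
Qed.

End FirstEntrance.

Section FirstHit.
Variables (R : realType) (V : finType) (e : rel V).
Local Notation hit_at := (hit_at R e).
Local Notation exit_at := (exit_at R e).
Local Notation first_hit := (first_hit R e).
Implicit Types (A B S : {set V}) (u v w x : V).

Lemma first_hitE A x v : first_hit A x v = limn (psum (fun k => hit_at A k x v)).
Proof.
rewrite /Defs.first_hit; congr (limn _); apply/funext => n.
by apply: eq_bigr => k _; rewrite hit_atE.
Qed.

Lemma shortcutQE S u w : shortcutQ R e S u w = limn (psum (fun k => exit_at S k u w)).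
Proof.
rewrite /shortcutQ; congr (limn _); apply/funext => n.
by apply: eq_bigr => k _; rewrite exit_atE.
Qed.

Lemma is_cvg_psum_hit_at A x w : w \in A -> cvgn (psum (fun k => hit_at A k x w)).
Proof.
move=> wA; apply: (@is_cvg_psum _ _ (fun k => hit_at_ge0 R e A k x w) 1) => n.
have := sum_psum_hit_at_le1 R e x n (_ : [set w] \subset A).
by rewrite big_set1; apply; rewrite finset.sub1set.
Qed.

Lemma is_cvg_psum_exit_at A x w : cvgn (psum (fun k => exit_at A k x w)).
Proof.
apply: (@is_cvg_psum _ _ (fun k => exit_at_ge0 R e A k x w) 1) => n.
apply: le_trans (sum_psum_hit_at_le1 R e x n (subxx A)).
rewrite /psum exchange_big /=; apply: ler_sum => k _.
rewrite -sum_exit_at (bigD1 w) //= lerDl.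
by apply: sumr_ge0 => v _; exact: exit_at_ge0.
Qed.

Lemma sum_first_hit_le1 A B x : B \subset A -> \sum_(w in B) first_hit A x w <= 1.
Proof.
move=> BA; under eq_bigr => w _ do rewrite first_hitE.
have cvg_hit w : w \in B -> cvgn (psum (fun k => hit_at A k x w)).
  by move=> /(fintype.subsetP BA); exact: is_cvg_psum_hit_at.
apply: (cvgr_to_le (cvgn_sum cvg_hit)).
by apply: nearW => n; exact: sum_psum_hit_at_le1.
Qed.

Lemma hit_at_le_first_hit A x v k : v \in A -> hit_at A k x v <= first_hit A x v.
Proof.
move=> vA; rewrite first_hitE; have hit_ge0 j := hit_at_ge0 R e A j x v.
apply: le_trans (psum_le_lim hit_ge0 k.+1 (is_cvg_psum_hit_at (x := x) vA)).
by rewrite /psum big_ord_recr /= lerDr sumr_ge0 // => j _; exact: hit_at_ge0.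
Qed.

Lemma QR_first_hit S u v : v \in S -> QR R e S u v = first_hit S u v.
Proof.
move=> vS; rewrite /QR first_hitE; apply/esym/cvg_lim => //.
have -> : psum (fun k => hit_at S k u v) =
    fun n => \sum_w psum (fun k => exit_at S k u w) n * Rmat R e S w v.
  apply/funext => n; apply/esym; rewrite /psum.
  under eq_bigr => w _ do rewrite mulr_suml.
  by rewrite exchange_big /=; apply: eq_bigr => k _; rewrite exit_at_Rmat.
apply: cvgn_sum => w _; apply: cvgMl; rewrite shortcutQE; exact: is_cvg_psum_exit_at.
Qed.

(* Split according to whether, and when, the walk visits u before the rest of S. *)
Lemma hit_at_setD1 S u v k x : u \in S ->
  hit_at (S :\ u) k x v =
  hit_at S k x v + \sum_(i < k) hit_at S i x u * hit_at (S :\ u) (k.-1 - i) u v.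
Proof.
move=> uS; elim: k x => [|k IH] x; first by rewrite big_ord0 addr0.
rewrite /= (bigD1 u) /=; last by rewrite !inE eqxx.
rewrite (eq_bigl (fun y => y \notin S)); last first.
  by move=> y; rewrite !inE; case: eqP => [->|_]; rewrite ?uS ?andbT.
under eq_bigr => y _ do rewrite IH mulrDr.
rewrite big_split /= big_ord_recl /= subn0 [LHS]addrCA; congr (_ + (_ + _)).
under eq_bigr => y _ do rewrite mulr_sumr.
rewrite exchange_big /=; apply: eq_bigr => i _.
rewrite add0n mulr_suml.
have -> : (k - bump 0 i = k.-1 - i)%N by rewrite /bump /=; lia.
by apply: eq_bigr => y _; rewrite mulrA.
Qed.

Lemma first_hit_setD1 S u v : u \in S -> v \in S -> u != v ->
  first_hit (S :\ u) u v = first_hit S u v + first_hit S u u * first_hit (S :\ u) u v.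
Proof.
move=> uS vS uv; have vSu : v \in S :\ u by rewrite !inE eq_sym uv.
rewrite !first_hitE; apply: renewal_lim => [k|k|k||||n];
  try exact: hit_at_ge0; try exact: is_cvg_psum_hit_at.
rewrite /psum; under eq_bigr => k _ do rewrite (hit_at_setD1 _ _ _ uS).
rewrite big_split /= (sum_triangle (fun i j => hit_at S i u u * hit_at (S :\ u) j u v)).
by congr (_ + _); apply: eq_bigr => i _; rewrite mulr_sumr.
Qed.

Lemma hit_atS_gt0 A k x y v : e x y -> y \notin A -> 0 < hit_at A k y v ->
  0 < hit_at A k.+1 x v.
Proof.
move=> exy yA hy; rewrite /= (bigD1 y) //= ltr_pwDl ?mulr_gt0 ?step_gt0 //.
by apply: sumr_ge0 => z _; rewrite mulr_ge0 ?step_ge0 ?hit_at_ge0.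
Qed.

Definition hits_other S u x := exists2 v, v \in S :\ u & exists k, 0 < hit_at S k x v.

Lemma hits_other_path S u x p : u \in S -> path e x p -> last x p \in S :\ u ->
  [\/ hits_other S u x, x \in S :\ u | hits_other S u u].
Proof.
move=> uS; elim: p x => [|y p IH] x /=; first by move=> _ xSu; apply: Or32.
move=> /andP[exy py] /(IH y py) [[v vSu [k hk]]|ySu|hu]; last 2 first.
- by apply: Or31; exists y => //; exists 0%N; exact: step_gt0.
- exact: Or33.
case: (boolP (y \in S)) => yS.
  case: (eqVneq y u) => [yu|ynu]; first by apply: Or33; exists v => //; exists k; rewrite -yu.
  by apply: Or31; exists y; [rewrite !inE ynu | exists 0%N; exact: step_gt0].
by apply: Or31; exists v => //; exists k.+1; exact: hit_atS_gt0 hk.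
Qed.

Lemma return_prob_lt1 S u : (forall x y, connect e x y) -> (2 <= #|S|)%N -> u \in S ->
  first_hit S u u < 1.
Proof.
move=> conn S2 uS; have [t tSu] : exists t, t \in S :\ u.
  by apply/card_gt0P; move: S2; rewrite (cardsD1 u S) uS; lia.
have [v vSu [k hk]] : hits_other S u u.
  have /connectP[p pp t_last] := conn u t; rewrite t_last in tSu.
  by case: (hits_other_path uS pp tSu) => //; rewrite !inE eqxx.
move: vSu; rewrite !inE => /andP[vu vS].
have uvS : [set u; v] \subset S by apply/fintype.subsetP => w; rewrite !inE => /orP[]/eqP->.
apply: lt_le_trans (sum_first_hit_le1 u uvS).
rewrite big_setU1 ?inE 1?eq_sym //= big_set1 ltrDl.
exact: lt_le_trans hk (hit_at_le_first_hit u k vS).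
Qed.

End FirstHit.

Theorem mainTheorem11 (R : realType) (V : finType) (e : rel V) (S : {set V})
  (hG : simple_connected_graph e) (hS : (2 <= #|S|)%N) :
  (forall u, u \in S ->
     QR R e S u u < 1 /\ QR R e S u u = return_prob R e S u) /\
  (forall u v, u \in S -> v \in S -> u != v ->
     schurS R e S u v = QR R e S u v / (1 - QR R e S u u)).
Proof.
have [_ [_ conn]] := hG.
split=> [u uS | u v uS vS uv].
  by rewrite QR_first_hit //; split; [exact: return_prob_lt1 | by []].
rewrite /schurS (negbTE uv) !QR_first_hit //.
have one_sub_ret_neq0 : 1 - first_hit R e S u u != 0.
  by rewrite subr_eq0 gt_eqF ?return_prob_lt1.
apply: (canRL (mulfK one_sub_ret_neq0)).
by rewrite mulrBr mulr1 {1}(first_hit_setD1 R e uS vS uv) mulrC addrK.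
Qed.
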